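(* For $i=1,\dots,d$ let $\{I_n^{(i)}\}_{n=1}^\infty$ be increasing sequences of symmetric integer intervals $I_n^{(i)}=[-a_n^{(i)};a_n^{(i)}]\subseteq\mathbb Z$. Then the sets $W_n=I_n^{(1)}\times\dots\times I_n^{(d)}\subseteq\mathbb Z^d$ form a $2^d$-incompressible sequence in $\mathbb Z^d$.
   Context: $[a;b]$ denotes $\{a,a+1,\dots,b\}$. In the additive group $\mathbb Z^d$, a sequence of translates $\{W_{n(i)}+f_i\}_{i=1}^I$ is incremental if $n(1)\ge\dots\ge n(I)$ and $f_i\notin\bigcup_{j<i}(W_{n(j)}+f_j)$. An increasing sequence $\{W_n\}$ of finite sets containing $0$ is $C$-incompressible if for every incremental sequence at most $C$ of the sets $W_{n(i)}+f_i$ contain $0$. *)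

From mathcomp Require Import all_boot all_order all_algebra.
Set Implicit Arguments. Unset Strict Implicit. Unset Printing Implicit Defensive.
Import Order.TTheory GRing.Theory Num.Theory.
Local Open Scope ring_scope.

Definition pt (d : nat) := {ffun 'I_d -> int}.

Definition zero_pt (d : nat) : pt d := [ffun _ => 0].

(* x \in W + f  <->  x - f \in W *)
Definition in_translate (d : nat) (W : pred (pt d)) (f x : pt d) : bool :=
  W [ffun i => x i - f i].

Definition finite_set (d : nat) (A : pred (pt d)) : Prop :=
  exists s : seq (pt d), forall x, A x -> x \in s.

(* A finite sequence {W_{n(i)} + f_i}_{i=1}^I, encoded as the list of pairs
   (n(i), f_i), is incremental: n(1) >= ... >= n(I) and
   f_i \notin \bigcup_{j<i} (W_{n(j)} + f_j). *)
Definition incremental (d : nat) (W : nat -> pred (pt d))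
    (s : seq (nat * pt d)) : Prop :=
  (forall i j, (i <= j < size s)%N ->
      ((nth (0%N, zero_pt d) s j).1 <= (nth (0%N, zero_pt d) s i).1)%N) /\
  (forall i j, (j < i < size s)%N ->
      ~~ in_translate (W (nth (0%N, zero_pt d) s j).1)
                      (nth (0%N, zero_pt d) s j).2
                      (nth (0%N, zero_pt d) s i).2).

Definition num_containing_zero (d : nat) (W : nat -> pred (pt d))
    (s : seq (nat * pt d)) : nat :=
  count (fun p => in_translate (W p.1) p.2 (zero_pt d)) s.

(* {W_n}_{n>=1} (indexed by n : nat; only n >= 1 is used) is an increasing
   sequence of finite sets containing 0, and is C-incompressible. *)
Definition incompressible (d : nat) (C : nat) (W : nat -> pred (pt d)) : Prop :=
  (forall n, (1 <= n)%N -> forall x, W n x -> W n.+1 x) /\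
  (forall n, (1 <= n)%N -> finite_set (W n)) /\
  (forall n, (1 <= n)%N -> W n (zero_pt d)) /\
  (forall s : seq (nat * pt d),
      all (fun p => (1 <= p.1)%N) s -> incremental W s ->
      (num_containing_zero W s <= C)%N).

Definition box (d : nat) (a : 'I_d -> nat -> nat) (n : nat) : pred (pt d) :=
  fun x => [forall i, `|x i| <= (a i n)%:Z].

From mathcomp Require Import all_boot all_order all_algebra.
From mathcomp Require Import zify.
Set Implicit Arguments.
Unset Strict Implicit.
Unset Printing Implicit Defensive.
Import Order.TTheory GRing.Theory Num.Theory.
Local Open Scope ring_scope.

(* Record for each member W_{n(i)} + f_i containing 0 the sign pattern of f_i,
   i.e. the orthant of Z^d containing f_i.  If a later member f_i had the same
   pattern as an earlier f_j, then both lie in W_{n(j)} (the boxes increase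
   and n(i) <= n(j)) and, having coordinates of equal signs, satisfy
   |f_i - f_j| <= a_{n(j)} coordinatewise, i.e. f_i \in W_{n(j)} + f_j,
   contradicting incrementality.  So at most 2^d members contain 0. *)

Lemma normB_le_same_sign (x y A : int) :
  (0 <= x) = (0 <= y) -> `|x| <= A -> `|y| <= A -> `|x - y| <= A.
Proof. by move=> ?; lia. Qed.

Lemma finite_setS (d : nat) (A B : pred (pt d)) :
  (forall x, A x -> B x) -> finite_set B -> finite_set A.
Proof. by move=> AB [s Bs]; exists s => x /AB /Bs. Qed.

Lemma finite_cube (d M : nat) :
  finite_set (fun x : pt d => [forall i, `|x i| <= M%:Z]).
Proof.
exists [seq [ffun i => (g i)%:Z - M%:Z] | g : {ffun 'I_d -> 'I_(M + M).+1}].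
move=> x /forallP xM; apply/mapP.
exists [ffun i => inord (absz (x i + M%:Z))]; first exact: mem_enum.
apply/ffunP => i; have := xM i; rewrite !ffunE; move: (x i) => y yM.
by rewrite inordK; lia.
Qed.

Lemma count_le_card_pairwise (T : Type) (K : finType) (p : pred T) (key : T -> K)
    (s : seq T) :
  pairwise (fun x y => p x ==> p y ==> (key x != key y)) s -> (count p s <= #|K|)%N.
Proof.
move=> ps; rewrite -size_filter -(size_map key).
have /card_uniqP <- : uniq (map key (filter p s)).
  rewrite uniq_pairwise pairwise_map.
  apply: (sub_in_pairwise (P := p)) (filter_all p s) (pairwise_filter p ps).
  by move=> x y px py /=; rewrite (px : p x) (py : p y).
exact: max_card.
Qed.

Lemma incremental_pairwise (d : nat) (W : nat -> pred (pt d)) s :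
  incremental W s ->
  pairwise (fun p q => (q.1 <= p.1)%N && ~~ in_translate (W p.1) p.2 q.2) s.
Proof.
move=> [dec notin]; apply/(pairwiseP (0%N, zero_pt d)) => j i /= js si ji.
by rewrite dec ?notin ?ji ?si // ltnW.
Qed.

Section Boxes.

Variables (d : nat) (a : 'I_d -> nat -> nat).
Hypothesis a_incr : forall (i : 'I_d) (n : nat), (1 <= n)%N -> (a i n <= a i n.+1)%N.

Definition sign_pattern (f : pt d) : {ffun 'I_d -> bool} := [ffun i => 0 <= f i].

Lemma box_incr n : (1 <= n)%N -> forall x, box a n x -> box a n.+1 x.
Proof.
move=> n1 x /forallP xn; apply/forallP => i.
by apply: le_trans (xn i) _; rewrite lez_nat a_incr.
Qed.

Lemma box_mono m n : (1 <= m)%N -> (m <= n)%N -> forall x, box a m x -> box a n x.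
Proof.
move=> m1 mn; have n1 := leq_trans m1 mn; move: m n m1 n1 mn.
apply: (homo_leq_in (D := fun n => (0 < n)%N) (f := box a)
  (r := fun A B => forall x, A x -> B x)) => //.
- by move=> B A C AB BC x /AB /BC.
- by move=> i j i0 _ k /andP[ik _]; apply: leq_trans i0 (ltnW ik).
- by move=> n /= n1 _; exact: box_incr.
Qed.

Lemma box_finite n : finite_set (box a n).
Proof.
apply: finite_setS (finite_cube d (\max_i a i n)) => x /forallP xn.
by apply/forallP => i; apply: le_trans (xn i) _; rewrite lez_nat (leq_bigmax i).
Qed.

Lemma box0 n : box a n (zero_pt d).
Proof. by apply/forallP => i; rewrite ffunE normr0. Qed.

Lemma in_translate_box0 n f : in_translate (box a n) f (zero_pt d) = box a n f.
Proof. by apply: eq_forallb => i; rewrite !ffunE sub0r normrN. Qed.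

Lemma in_translate_box_same_sign n f g :
  sign_pattern f = sign_pattern g -> box a n f -> box a n g ->
  in_translate (box a n) g f.
Proof.
move=> /ffunP fg /forallP fn /forallP gn; apply/forallP => i; rewrite ffunE.
by apply: normB_le_same_sign; [have := fg i; rewrite !ffunE | |].
Qed.

Lemma sign_pattern_neq m n f g : (1 <= n)%N -> (n <= m)%N ->
  ~~ in_translate (box a m) f g -> box a m f -> box a n g ->
  sign_pattern f != sign_pattern g.
Proof.
move=> n1 nm g_notin fm gn; apply: contraNneq g_notin => fg.
exact: in_translate_box_same_sign (esym fg) (box_mono n1 nm gn) fm.
Qed.

End Boxes.

Theorem proposition2p5 (d : nat) (a : 'I_d -> nat -> nat)
  (Hinc : forall (i : 'I_d) (n : nat), (1 <= n)%N -> (a i n <= a i n.+1)%N) :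
  incompressible (2 ^ d)%N (box a).
Proof.
split; first exact: box_incr.
split; first by move=> n _; exact: box_finite.
split; first by move=> n _; exact: box0.
move=> s s_pos /incremental_pairwise s_incr.
have -> : (2 ^ d)%N = #|{ffun 'I_d -> bool}| by rewrite card_ffun card_bool card_ord.
apply: (count_le_card_pairwise (key := fun p => sign_pattern p.2)).
apply: sub_in_pairwise s_pos s_incr => -[m f] [n g] _ /= n1 /andP[nm g_notin].
rewrite !in_translate_box0; apply/implyP => fm; apply/implyP => gn.
exact: (sign_pattern_neq Hinc n1 nm g_notin fm gn).
Qed.
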